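(* For every $A\subseteq\Omega$, $$\mu^*(A) = \inf\Big\{c\in(0,1]: \liminf_{t\to\infty} cE_t\ge \mathbf{1}_A \text{ pointwise on }\Omega\Big\} = \inf\Big\{c\in(0,1]: \sup_{t\in\mathbb{N}_0} cE_t\ge \mathbf{1}_A\text{ pointwise on }\Omega\Big\},$$ where in each infimum $c$ ranges over $(0,1]$ and $(E_t)_{t\in\mathbb{N}_0}$ ranges over all $\mathcal{P}$-e-processes (i.e. the infimum is over all $c$ for which some $\mathcal{P}$-e-process satisfies the displayed inequality).
   Context: Standing setup: $(\Omega, (\mathcal{F}_t)_{t\in\mathbb{N}_0}, \mathcal{F})$ is a filtered measurable space with $\mathcal{F} = \sigma\big(\bigcup_{t} \mathcal{F}_t\big)$. A stopping time is a map $\tau:\Omega\to\mathbb{N}_0\cup\{\infty\}$ with $\{\tau \le t\}\in\mathcal{F}_t$ for all $t$; $\mathcal{T}$ denotes the set of all stopping times. $\mathcal{P}$ is an arbitrary family of probability measures on $\mathcal{F}$. The inverse-capital measure is defined for every $A\subseteq\Omega$ by $\mu^*(A) = \inf_{\tau\in\mathcal{T}:\, A\subseteq\{\tau<\infty\}} \sup_{\mathbb{P}\in\mathcal{P}} \mathbb{P}(\tau<\infty)$. A $\mathcal{P}$-e-process is a nonnegative (possibly $[0,\infty]$-valued) process $(E_t)_{t\in\mathbb{N}_0}$ adapted to $(\mathcal{F}_t)$ such that $\mathbb{E}_{\mathbb{P}}[E_\tau]\le 1$ for every $\mathbb{P}\in\mathcal{P}$ and every $\tau\in\mathcal{T}$,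 with the convention $E_\infty=\limsup_{t\to\infty}E_t$. *)

From HB Require Import structures.
From mathcomp Require Import all_boot all_order all_algebra.
From mathcomp Require Import all_classical all_reals all_analysis measurable_realfun.
Set Implicit Arguments. Unset Strict Implicit. Unset Printing Implicit Defensive.
Import Order.TTheory GRing.Theory Num.Theory.
Local Open Scope classical_set_scope.
Local Open Scope ring_scope.
Local Open Scope ereal_scope.

Section Defs.
Context {d : measure_display} {T : measurableType d} {R : realType}.

Definition filtration (F : nat -> set (set T)) :=
  (forall t, sigma_algebra setT (F t)) /\
  (forall s t, (s <= t)%N -> F s `<=` F t).

(* Stopping times with values in N_0 ∪ {∞}; [None] encodes ∞. *)
Definition stopping_time (F : nat -> set (set T)) (tau : T -> option nat) :=
  forall t : nat, F t [set x | exists2 s, tau x = Some s & (s <= t)%N].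

Definition finite_event (tau : T -> option nat) : set T :=
  [set x | tau x <> None].

(* Inverse-capital measure mu*(A).  The sup over P is taken in [0,+oo]
   (hence the extra 0), so that sup over an empty family is 0. *)
Definition inverse_capital (F : nat -> set (set T))
    (Pfam : set (probability T R)) (A : set T) : \bar R :=
  ereal_inf [set ereal_sup (0 |` [set P (finite_event tau) | P in Pfam])
            | tau in [set tau | stopping_time F tau /\ A `<=` finite_event tau]].

Definition stopped (E : nat -> T -> \bar R) (tau : T -> option nat) : T -> \bar R :=
  fun x => match tau x with
           | Some t => E t x
           | None => limn_esup (fun t => E t x)
           end.

Definition adapted (F : nat -> set (set T)) (E : nat -> T -> \bar R) :=
  forall t (B : set (\bar R)), measurable B -> F t (E t @^-1` B).

Definition e_process (F : nat -> set (set T)) (Pfam : set (probability T R))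
    (E : nat -> T -> \bar R) :=
  (forall t x, 0 <= E t x) /\ adapted F E /\
  (forall P tau, Pfam P -> stopping_time F tau ->
     \int[P]_x stopped E tau x <= 1).

Definition inf_liminf (F : nat -> set (set T)) (Pfam : set (probability T R))
    (A : set T) : \bar R :=
  ereal_inf [set c%:E | c in [set c : R | (0 < c <= 1)%R /\
     exists E, e_process F Pfam E /\
       forall x, ((\1_A x : R)%:E <= limn_einf (fun t => c%:E * E t x))]].

Definition inf_sup (F : nat -> set (set T)) (Pfam : set (probability T R))
    (A : set T) : \bar R :=
  ereal_inf [set c%:E | c in [set c : R | (0 < c <= 1)%R /\
     exists E, e_process F Pfam E /\
       forall x, ((\1_A x : R)%:E <= ereal_sup (range (fun t => c%:E * E t x)))]].

End Defs.

(** For [mu*(A) <= c] the witness is a stopping time [tau] with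
    [A <= {tau < oo}] and [P(tau < oo) <= c] for all [P], and the e-process
    [c^-1 1{tau <= t}] then has [liminf_t c E_t >= 1_A].  Conversely, if
    [sup_t c E_t >= 1_A] then the hitting time of the level [(c + e)^-1] is
    finite on [A], and Ville's (Markov's) inequality for the stopped
    e-process bounds [P(tau < oo)] by [c + e].  The chain closes because a
    liminf never exceeds a sup. *)

From HB Require Import structures.
From mathcomp Require Import all_boot all_order all_algebra.
From mathcomp Require Import all_classical all_reals all_analysis measurable_realfun.
From mathcomp Require Import lra.
Set Implicit Arguments. Unset Strict Implicit. Unset Printing Implicit Defensive.
Import Order.TTheory GRing.Theory Num.Theory.
Local Open Scope classical_set_scope.
Local Open Scope ring_scope.
Local Open Scope ereal_scope.

Section ereal_sequences.
Context {R : realType}.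
Implicit Types (u : (\bar R)^nat) (a : \bar R).

Lemma limn_einf_ge u a N : (forall n, (N <= n)%N -> a <= u n) -> a <= limn_einf u.
Proof.
move=> uNa; rewrite limn_einf_lim; apply: lime_ge; first exact: is_cvg_einfs.
exists N => // n /= Nn; apply: le_ereal_inf_tmp => _ [k /= nk <-].
exact/uNa/(leq_trans Nn).
Qed.

Lemma limn_esup_le u a : (forall n, u n <= a) -> limn_esup u <= a.
Proof.
move=> ua; rewrite limn_esup_lim (cvg_lim _ (@cvg_esups_inf R u)) //.
apply: (@le_trans _ _ (esups u 0%N)); first by apply: ereal_inf_lbound; exists 0%N.
by apply: ge_ereal_sup => _ [k _ <-].
Qed.

Lemma limn_einf_le_sup u : limn_einf u <= ereal_sup (range u).
Proof.
apply: le_trans (limn_einf_sup u) _; apply: limn_esup_le => n.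
by apply: ereal_sup_ubound; exists n.
Qed.

Lemma le_ereal_ubounds (x s : \bar R) : 0 <= s ->
  (forall c : R, (0 < c)%R -> s <= c%:E -> x <= c%:E) -> x <= s.
Proof.
case: s => [r r0 xc| _ _|//]; last exact: leey.
rewrite lee_fin in r0; apply/lee_addgt0Pr => e e0.
by rewrite -EFinD; apply: xc; rewrite ?lee_fin; lra.
Qed.

End ereal_sequences.

Section nonneg_integral.
Context d (T : measurableType d) (R : realType) (mu : {measure set T -> \bar R}).

Import HBNNSimple.

(* The nonnegative integral is a supremum over simple minorants, so it is
   monotone without any measurability assumption. *)
Lemma ge0_le_integralT (f g : T -> \bar R) :
  (forall x, 0 <= f x) -> (forall x, f x <= g x) ->
  \int[mu]_x f x <= \int[mu]_x g x.
Proof.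
move=> f0 fg; have g0 x := le_trans (f0 x) (fg x).
rewrite !ge0_integralTE //; apply: ereal_sup_le => _ [h hf <-].
by exists h => // x; exact: le_trans (hf x) (fg x).
Qed.

Lemma integral_scaled_indic (S : set T) (k : R) : measurable S -> (0 <= k)%R ->
  \int[mu]_x (k * \1_S x)%:E = k%:E * mu S.
Proof.
move=> mS k0; rewrite (integralZl_indic _ (fun=> S)) //; last first.
  by rewrite ltNge k0.
by rewrite integral_indic // setIT.
Qed.

Lemma markov_ge0 (f : T -> \bar R) (S : set T) (k : R) :
  measurable S -> (0 <= k)%R -> (forall x, 0 <= f x) ->
  (forall x, S x -> k%:E <= f x) -> k%:E * mu S <= \int[mu]_x f x.
Proof.
move=> mS k0 f0 Sf; rewrite -integral_scaled_indic //.
apply: ge0_le_integralT => [x|x]; first by rewrite lee_fin mulr_ge0.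
rewrite indicE; case: (pselect (S x)) => Sx.
  by rewrite mem_set // mulr1; exact: Sf.
by rewrite memNset // mulr0.
Qed.

End nonneg_integral.

Lemma preimage_two_valued T (G : set (set T)) (S : set T) (R : Type)
    (g : T -> R) a b (B : set R) :
  sigma_algebra setT G -> G S ->
  (forall x, S x -> g x = a) -> (forall x, ~ S x -> g x = b) -> G (g @^-1` B).
Proof.
move=> /sigma_algebra_id <- GS ga gb.
have gE x : g x = (if `[< S x >] then a else b).
  by case: asboolP => Sx; [exact: ga|exact: gb].
have GT : <<s setT, G >> setT.
  by have := sigma_algebraCD (@sigma_algebra0 _ setT G); rewrite setD0.
case: (pselect (B a)) => Ba; case: (pselect (B b)) => Bb.
- suff -> : g @^-1` B = setT by [].
  by apply/seteqP; split => x //= _; rewrite gE; case: ifP.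
- suff -> : g @^-1` B = S by [].
  by apply/seteqP; split => x /=; rewrite gE; case: asboolP.
- suff -> : g @^-1` B = ~` S by rewrite -setTD; exact: sigma_algebraCD.
  by apply/seteqP; split => x /=; rewrite gE; case: asboolP.
- suff -> : g @^-1` B = set0 by exact: sigma_algebra0.
  by apply/seteqP; split => x //=; rewrite gE; case: ifP.
Qed.

Section inverse_capital_characterizations.
Context {d : measure_display} {T : measurableType d} {R : realType}.
Variables (F : nat -> set (set T)) (Pfam : set (probability T R)).
Hypothesis hF : filtration F.
Hypothesis hgen : (@measurable d T) = <<s \bigcup_t F t >>.

Definition stopped_by (tau : T -> option nat) t : set T :=
  [set x | exists2 s, tau x = Some s & (s <= t)%N].

Lemma measurable_finite_event tau :
  stopping_time F tau -> measurable (finite_event tau).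
Proof.
move=> st; have -> : finite_event tau = \bigcup_t stopped_by tau t.
  apply/seteqP; split => x /=.
    by case E : (tau x) => [s|//] _; exists s => //; exists s.
  by move=> [t _ [s tx _]]; rewrite /finite_event /= tx.
apply: bigcupT_measurable => t.
by rewrite hgen; apply: sub_sigma_algebra; exists t.
Qed.

Lemma stopped_ge0 (E : nat -> T -> \bar R) tau :
  (forall t x, 0 <= E t x) -> forall x, 0 <= stopped E tau x.
Proof.
move=> E0 x; rewrite /stopped; case: (tau x) => [t|]; first exact: E0.
apply: le_trans (limn_einf_sup _).
by apply: (@limn_einf_ge _ _ _ 0%N) => n _.
Qed.

Lemma stopped_le (E : nat -> T -> \bar R) tau (g : T -> \bar R) :
  (forall t x, E t x <= g x) -> forall x, stopped E tau x <= g x.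
Proof.
by move=> Eg x; rewrite /stopped; case: (tau x) => [t|]; last exact: limn_esup_le.
Qed.

Definition indicator_process (tau : T -> option nat) (a : R) : nat -> T -> \bar R :=
  fun t x => if `[< stopped_by tau t x >] then a%:E else 0.

Section indicator_process.
Variables (tau : T -> option nat) (a : R).
Hypothesis a0 : (0 <= a)%R.

Lemma indicator_process_ge0 t x : 0 <= indicator_process tau a t x.
Proof. by rewrite /indicator_process; case: ifP; rewrite ?lee_fin. Qed.

Lemma indicator_process_le t x :
  indicator_process tau a t x <= (a * \1_(finite_event tau) x)%:E.
Proof.
rewrite /indicator_process indicE; case: asboolP => [[s tx _]|_].
  by rewrite mem_set ?mulr1 // /finite_event /= tx.
by rewrite lee_fin mulr_ge0.
Qed.

Lemma adapted_indicator_process :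
  stopping_time F tau -> adapted F (indicator_process tau a).
Proof.
move=> st t B _.
apply: (preimage_two_valued (a := a%:E) (b := 0) _ (hF.1 t) (st t)).
- by move=> x tx; rewrite /indicator_process asboolT.
- by move=> x tx; rewrite /indicator_process asboolF.
Qed.

Lemma indicator_process_eventually x s : tau x = Some s ->
  forall t, (s <= t)%N -> indicator_process tau a t x = a%:E.
Proof. by move=> tx t st; rewrite /indicator_process asboolT //; exists s. Qed.

End indicator_process.

Lemma e_process_indicator_process tau c : stopping_time F tau -> (0 < c)%R ->
  (forall P, Pfam P -> P (finite_event tau) <= c%:E) ->
  e_process F Pfam (indicator_process tau c^-1).
Proof.
move=> st c0 Pc; have ci0 : (0 <= c^-1)%R by rewrite invr_ge0 ltW.
split; [exact: indicator_process_ge0|split; first exact: adapted_indicator_process].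
move=> P tau' PP _.
have : \int[P]_x stopped (indicator_process tau c^-1) tau' x
         <= \int[P]_x (c^-1 * \1_(finite_event tau) x)%:E.
  apply: ge0_le_integralT; first exact/stopped_ge0/indicator_process_ge0.
  exact/stopped_le/indicator_process_le.
move/le_trans; apply.
rewrite integral_scaled_indic //; last exact: measurable_finite_event.
rewrite -(mulVf (lt0r_neq0 c0)) EFinM; apply: lee_wpmul2l; last exact: Pc.
by rewrite lee_fin.
Qed.

Lemma inf_liminf_le_finite_event_bound A tau c :
  stopping_time F tau -> A `<=` finite_event tau -> (0 < c <= 1)%R ->
  (forall P, Pfam P -> P (finite_event tau) <= c%:E) ->
  inf_liminf F Pfam A <= c%:E.
Proof.
move=> st Atau /andP[c0 c1] Pc; apply: ereal_inf_lbound; exists c => //.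
split; first by rewrite c0 c1.
exists (indicator_process tau c^-1); split; first exact: e_process_indicator_process.
move=> x; rewrite indicE; case: (pselect (A x)) => Ax; last first.
  rewrite memNset //; apply: (@limn_einf_ge _ _ _ 0%N) => n _.
  apply: mule_ge0; first by rewrite lee_fin ltW.
  by apply: indicator_process_ge0; rewrite invr_ge0 ltW.
have := Atau x Ax; rewrite mem_set //; case tx : (tau x) => [s|//] _.
apply: (@limn_einf_ge _ _ _ s) => n sn.
by rewrite (indicator_process_eventually _ tx) // -EFinM mulfV ?gt_eqF.
Qed.

Definition hitting_time (E : nat -> T -> \bar R) (a : \bar R) (x : T) : option nat :=
  match pselect (exists t, a <= E t x) with
  | left h => Some (ex_minn h)
  | right _ => None
  end.

Section hitting_time.
Variables (E : nat -> T -> \bar R) (a : \bar R).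

Lemma hitting_time_reached x s : hitting_time E a x = Some s -> a <= E s x.
Proof. by rewrite /hitting_time; case: pselect => // h [<-]; case: ex_minnP. Qed.

Lemma finite_event_hitting_time x :
  finite_event (hitting_time E a) x <-> exists t, a <= E t x.
Proof.
rewrite /finite_event /hitting_time /=.
by case: pselect => h; split => // /h.
Qed.

Lemma stopped_by_hitting_time t x :
  stopped_by (hitting_time E a) t x <-> exists2 s, (s <= t)%N & a <= E s x.
Proof.
split => [[s hs st]|[s st Es]]; first by exists s => //; exact: hitting_time_reached.
rewrite /stopped_by /hitting_time /=.
case: pselect => [h|h]; last by exfalso; apply: h; exists s.
by case: ex_minnP => m _ minm; exists m => //; exact: leq_trans (minm _ Es) st.
Qed.

Lemma stopping_time_hitting_time : adapted F E -> stopping_time F (hitting_time E a).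
Proof.
move=> Ead t; change (F t (stopped_by (hitting_time E a) t)).
have -> : stopped_by (hitting_time E a) t =
    \bigcup_n (if (n <= t)%N then E n @^-1` `[a, +oo]%classic else set0).
  apply/seteqP; split => x.
  - move/stopped_by_hitting_time => [s st Es].
    by exists s => //; rewrite st /= in_itv /= Es leey.
  - move=> [n _]; case: ifP => // nt; rewrite /= in_itv /= => /andP[Es _].
    by apply/stopped_by_hitting_time; exists n.
have [[F0 _ Fbig] Fmono] := (hF.1 t, hF.2).
apply: Fbig => n; case: ifP => nt //.
by apply: (Fmono _ _ nt); apply: Ead; exact: emeasurable_itv.
Qed.

End hitting_time.

Lemma ville_inequality (E : nat -> T -> \bar R) P (a : R) :
  e_process F Pfam E -> Pfam P -> (0 < a)%R ->
  a%:E * P (finite_event (hitting_time E a%:E)) <= 1.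
Proof.
move=> [E0 [Ead Eint]] PP a0.
have st := stopping_time_hitting_time a%:E Ead.
apply: le_trans (Eint P _ PP st).
apply: markov_ge0 (ltW a0) (stopped_ge0 _ E0) _; first exact: measurable_finite_event.
rewrite /finite_event /stopped => x /=.
by case tx: (hitting_time _ _ x) => [s|//] _; exact: hitting_time_reached tx.
Qed.

Lemma inf_liminf_le_inverse_capital A :
  inf_liminf F Pfam A <= inverse_capital F Pfam A.
Proof.
apply: le_ereal_inf_tmp => _ [tau [st Atau] <-].
apply: le_ereal_ubounds; first by apply: ereal_sup_ubound; left.
move=> c c0 sc.
apply: (@le_trans _ _ (Num.min c 1)%:E); last by rewrite lee_fin ge_min lexx.
apply: (inf_liminf_le_finite_event_bound st Atau) => [|P PP].
  by rewrite lt_min c0 ltr01 ge_min lexx orbT.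
rewrite EFin_min le_min probability_le1 ?andbT; last exact: measurable_finite_event.
by apply: le_trans sc; apply: ereal_sup_ubound; right; exists P.
Qed.

Lemma inverse_capital_le_inf_sup A : inverse_capital F Pfam A <= inf_sup F Pfam A.
Proof.
apply: le_ereal_inf_tmp => _ [c [/andP[c0 c1] [E [eE Esup]]] <-].
apply/lee_addgt0Pr => e e0; have ce0 : (0 < c + e)%R by lra.
pose tau := hitting_time E ((c + e)^-1)%:E.
have Atau : A `<=` finite_event tau.
  move=> x Ax; apply/finite_event_hitting_time.
  have := Esup x; rewrite indicE mem_set //= => supge1.
  have /ereal_sup_gt[_ [t _ <-] cEt] :
      (c / (c + e))%:E < ereal_sup (range (fun t => c%:E * E t x)).
    by apply: lt_le_trans supge1; rewrite lte_fin ltr_pdivrMr // mul1r; lra.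
  exists t; rewrite leNgt; apply/negP => Et.
  move: cEt; rewrite EFinM lte_pmul2l ?lte_fin // => /(lt_trans Et).
  by rewrite ltxx.
apply: (@le_trans _ _ (ereal_sup (0%R |` [set P (finite_event tau) | P in Pfam]))).
  apply: ereal_inf_lbound; exists tau => //; split => //.
  exact: stopping_time_hitting_time eE.2.1.
apply: ge_ereal_sup => _ [->|[P PP <-]]; first by rewrite -EFinD lee_fin ltW.
have ai0 : (0 < (c + e)^-1)%R by rewrite invr_gt0.
have := ville_inequality eE PP ai0.
by rewrite (lee_pdivrMl _ _ ce0) mule1 EFinD.
Qed.

Lemma inf_sup_le_inf_liminf A : inf_sup F Pfam A <= inf_liminf F Pfam A.
Proof.
apply: ereal_inf_le_tmp => _ [c [c01 [E [eE Eliminf]]] <-]; exists c => //.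
split => //; exists E; split => // x.
exact: le_trans (Eliminf x) (limn_einf_le_sup _).
Qed.

End inverse_capital_characterizations.

Theorem mainTheorem5 (d : measure_display) (T : measurableType d) (R : realType)
  (F : nat -> set (set T)) (Pfam : set (probability T R))
  (hF : filtration F)
  (hgen : (@measurable d T) = <<s \bigcup_t F t >>)
  (A : set T) :
  @inverse_capital d T R F Pfam A = inf_liminf F Pfam A /\
  @inverse_capital d T R F Pfam A = inf_sup F Pfam A.
Proof.
have liminf_le := inf_liminf_le_inverse_capital Pfam hF hgen A.
have le_sup := inverse_capital_le_inf_sup Pfam hF hgen A.
have sup_le := inf_sup_le_inf_liminf F Pfam A.
split; apply/le_anti/andP; split => //.
- exact: le_trans le_sup sup_le.
- exact: le_trans sup_le liminf_le.
Qed.
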